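(* Let $L\ge1$ be an integer and $h(x)=\mathrm{sech}\big((2L+1)\,\mathrm{arcsech}(x)\big)$. Then $h$ is monotonically increasing and convex on the interval $(0,1)$. *)

From Stdlib Require Import Reals.
Open Scope R_scope.

Definition sech (y : R) : R := / cosh y.

Definition arcsech (x : R) : R := ln ((1 + sqrt (1 - x ^ 2)) / x).

Definition h (L : nat) (x : R) : R := sech ((2 * INR L + 1) * arcsech x).

From Stdlib Require Import Reals Lra Psatz.
From Coquelicot Require Import Coquelicot.
Open Scope R_scope.

(** With u = arcsech x we have x = sech u and h(x) = sech (n u), n = 2L + 1.
    Monotonicity: arcsech is decreasing and sech is decreasing on (0, oo).
    Convexity: by Cauchy's mean value theorem each chord slope of h over
    [x, z] equals Q(xi) = n F(n xi) / F(xi) ([sech_deriv_ratio]) for some xi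
    between arcsech z and arcsech x, where F = sinh / cosh^2 = - sech'
    ([tanh_sech]).  So chord slopes increase with x as soon as Q is
    nonincreasing on (0, oo).  Now u Q'(u) has the sign of E(n u) - E(u), where
    E(v) = v F'(v) / F(v) = v (1 - sinh^2 v) / (sinh v cosh v) is the
    elasticity of F ([tanh_sech_elasticity]), and E is nonincreasing because
    sinh v <= v cosh v. *)

Lemma nonincreasing_of_is_derive (f : R -> R) (lo : R) :
  (forall t, lo <= t -> exists2 df, is_derive f t df & df <= 0) ->
  forall x y, lo <= x -> x <= y -> f y <= f x.
Proof.
intros Hd x y Hx [Hxy | <-]; [| lra].
assert (HD : forall t, lo <= t -> is_derive f t (Derive f t) /\ Derive f t <= 0).
{ intros t Ht. destruct (Hd t Ht) as [df Hdf Hneg].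
  rewrite (is_derive_unique f t df Hdf). now split. }
destruct (MVT_cor2 f (Derive f) x y Hxy) as [c [Hc Hxcy]].
- intros c Hc. apply is_derive_Reals, HD. lra.
- assert (Derive f c <= 0) by (apply HD; lra). nra.
Qed.

Lemma cauchy_mean_value (f g f' g' : R -> R) (a b : R) : a < b ->
  (forall c, a <= c <= b -> is_derive f c (f' c)) ->
  (forall c, a <= c <= b -> is_derive g c (g' c)) ->
  exists c, a < c < b /\ (g b - g a) * f' c = (f b - f a) * g' c.
Proof.
intros Hab Hf Hg.
destruct (MVT_cor2 (fun t => (g b - g a) * f t - (f b - f a) * g t)
  (fun t => (g b - g a) * f' t - (f b - f a) * g' t) a b Hab) as [c [Hc Hacb]].
- intros c Hc. apply is_derive_Reals.
  apply (is_derive_minus (fun t => (g b - g a) * f t) (fun t => (f b - f a) * g t));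
    apply is_derive_scal; auto.
- exists c. split; [exact Hacb |].
  assert (Hzero : ((g b - g a) * f' c - (f b - f a) * g' c) * (b - a) = 0)
    by (rewrite <- Hc; ring).
  apply Rmult_integral in Hzero as [Hzero | Hzero]; lra.
Qed.

Lemma is_derive_comp_scal (f : R -> R) (n u df : R) :
  is_derive f (n * u) df -> is_derive (fun u => f (n * u)) u (n * df).
Proof.
intros Hf. apply (is_derive_comp f (fun u => n * u)); [exact Hf |].
auto_derive; [easy | ring].
Qed.

Definition convex_on (a b : R) (f : R -> R) : Prop :=
  forall x y t, a < x < b -> a < y < b -> 0 <= t <= 1 ->
    f (t * x + (1 - t) * y) <= t * f x + (1 - t) * f y.

Lemma convex_on_of_lt (a b : R) (f : R -> R) :
  (forall x y t, a < x -> x < y -> y < b -> 0 < t < 1 ->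
     f (t * x + (1 - t) * y) <= t * f x + (1 - t) * f y) ->
  convex_on a b f.
Proof.
intros Hlt x y t Hx Hy Ht.
destruct (Req_dec t 0) as [-> | Ht0].
{ replace (0 * x + (1 - 0) * y) with y by ring. lra. }
destruct (Req_dec t 1) as [-> | Ht1].
{ replace (1 * x + (1 - 1) * y) with x by ring. lra. }
destruct (Rtotal_order x y) as [Hxy | [<- | Hyx]].
- apply Hlt; lra.
- replace (t * x + (1 - t) * x) with x by ring. lra.
- replace (t * x + (1 - t) * y) with ((1 - t) * y + (1 - (1 - t)) * x) by ring.
  assert (Hswap := Hlt y x (1 - t) ltac:(lra) Hyx ltac:(lra) ltac:(lra)).
  lra.
Qed.

Lemma le_convex_combination_of_slopes (f : R -> R) (x y t s1 s2 : R) :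
  0 <= t <= 1 -> x <= y -> s1 <= s2 ->
  let z := t * x + (1 - t) * y in
  f x = f z + (x - z) * s1 -> f y = f z + (y - z) * s2 ->
  f z <= t * f x + (1 - t) * f y.
Proof.
intros Ht Hxy Hs z -> ->.
replace (t * (f z + (x - z) * s1) + (1 - t) * (f z + (y - z) * s2))
  with (f z + t * (1 - t) * (y - x) * (s2 - s1)) by (unfold z; ring).
assert (0 <= t * (1 - t) * (y - x) * (s2 - s1)) by (repeat apply Rmult_le_pos; lra).
lra.
Qed.

Lemma cosh_pos v : 0 < cosh v.
Proof. unfold cosh. pose proof (exp_pos v). pose proof (exp_pos (- v)). lra. Qed.

Lemma cosh_sq v : cosh v ^ 2 = 1 + sinh v ^ 2.
Proof. unfold cosh, sinh. rewrite exp_Ropp. pose proof (exp_pos v). field. lra. Qed.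

Lemma sinh_pos v : 0 < v -> 0 < sinh v.
Proof. intros Hv. rewrite <- sinh_0. now apply sinh_lt. Qed.

Lemma cosh_increasing x y : 0 < x -> x < y -> cosh x < cosh y.
Proof.
intros Hx Hxy.
apply (incr_function cosh 0 p_infty sinh); simpl; auto.
- intros t _ _. apply is_derive_Reals, derivable_pt_lim_cosh.
- intros t Ht _. now apply sinh_pos.
Qed.

Lemma sinh_le_mul_cosh v : 0 <= v -> sinh v <= v * cosh v.
Proof.
intros Hv.
enough (sinh v - v * cosh v <= sinh 0 - 0 * cosh 0) by (rewrite sinh_0 in *; lra).
apply (nonincreasing_of_is_derive (fun v => sinh v - v * cosh v) 0); [| lra | exact Hv].
intros t Ht. exists (- (t * sinh t)).
- unfold cosh, sinh. auto_derive; [easy | field].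
- destruct Ht as [Ht | <-]; [pose proof (sinh_pos t Ht); nra | lra].
Qed.

Lemma arcsech_pos x : 0 < x < 1 -> 0 < arcsech x.
Proof.
intros Hx. unfold arcsech. rewrite <- ln_1. apply ln_increasing; [lra |].
assert (0 <= sqrt (1 - x ^ 2)) by apply sqrt_pos.
apply (Rmult_lt_reg_r x); [lra |]. unfold Rdiv. rewrite Rmult_assoc, Rinv_l; lra.
Qed.

Lemma sech_arcsech x : 0 < x <= 1 -> sech (arcsech x) = x.
Proof.
intros Hx. unfold sech, arcsech, cosh.
assert (Hr : 0 <= sqrt (1 - x ^ 2)) by apply sqrt_pos.
assert (Hr2 : sqrt (1 - x ^ 2) ^ 2 = 1 - x ^ 2)
  by (rewrite <- Rsqr_pow2; apply Rsqr_sqrt; nra).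
set (r := sqrt (1 - x ^ 2)) in *.
rewrite exp_Ropp, exp_ln by (apply Rdiv_lt_0_compat; lra).
field_simplify; [| repeat split; nra].
replace (x ^ 2) with (1 - r ^ 2) by lra.
field. nra.
Qed.

Lemma arcsech_decreasing x y : 0 < x -> x < y <= 1 -> arcsech y < arcsech x.
Proof.
intros Hx Hy. unfold arcsech.
assert (Hs : sqrt (1 - y ^ 2) <= sqrt (1 - x ^ 2)) by (apply sqrt_le_1_alt; nra).
assert (0 <= sqrt (1 - y ^ 2)) by apply sqrt_pos.
apply ln_increasing; [apply Rdiv_lt_0_compat; lra |].
apply Rle_lt_trans with ((1 + sqrt (1 - x ^ 2)) / y); unfold Rdiv.
- apply Rmult_le_compat_r; [left; apply Rinv_0_lt_compat |]; lra.
- apply Rmult_lt_compat_l; [lra | apply Rinv_lt_contravar; nra].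
Qed.

Definition tanh_sech (v : R) : R := sinh v / cosh v ^ 2.
Definition tanh_sech_deriv (v : R) : R := (1 - sinh v ^ 2) / cosh v ^ 3.
Definition tanh_sech_elasticity (v : R) : R := v * (1 - sinh v ^ 2) / (sinh v * cosh v).
Definition sech_deriv_ratio (n u : R) : R := n * tanh_sech (n * u) / tanh_sech u.

Lemma is_derive_sech v : is_derive sech v (- tanh_sech v).
Proof.
pose proof (cosh_pos v). unfold sech, tanh_sech. unfold cosh, sinh in *.
auto_derive; [lra | field; lra].
Qed.

Lemma is_derive_tanh_sech v : is_derive tanh_sech v (tanh_sech_deriv v).
Proof.
unfold tanh_sech_deriv.
replace (1 - sinh v ^ 2) with (cosh v ^ 2 - 2 * sinh v ^ 2) by (rewrite cosh_sq; ring).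
pose proof (cosh_pos v). unfold tanh_sech. unfold cosh, sinh in *.
auto_derive; [nra | field; lra].
Qed.

Lemma tanh_sech_pos v : 0 < v -> 0 < tanh_sech v.
Proof.
intros Hv. apply Rdiv_lt_0_compat; [now apply sinh_pos | apply pow_lt, cosh_pos].
Qed.

Lemma tanh_sech_elasticity_spec v : 0 < v ->
  tanh_sech_elasticity v * tanh_sech v = v * tanh_sech_deriv v.
Proof.
intros Hv. pose proof (sinh_pos v Hv). pose proof (cosh_pos v).
unfold tanh_sech_elasticity, tanh_sech, tanh_sech_deriv. field. lra.
Qed.

Lemma is_derive_tanh_sech_elasticity v : 0 < v ->
  is_derive tanh_sech_elasticity v
    ((sinh v * cosh v * (1 - sinh v ^ 2) - v * (1 + 3 * sinh v ^ 2)) / (sinh v * cosh v) ^ 2).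
Proof.
intros Hv. pose proof (sinh_pos v Hv). pose proof (cosh_pos v).
(* The quotient rule gives the first two summands; the third one vanishes
   since cosh^2 = 1 + sinh^2. *)
replace (sinh v * cosh v * (1 - sinh v ^ 2) - v * (1 + 3 * sinh v ^ 2))
  with ((1 - sinh v ^ 2 - 2 * v * sinh v * cosh v) * (sinh v * cosh v)
        - v * (1 - sinh v ^ 2) * (cosh v ^ 2 + sinh v ^ 2)
        + v * (1 + sinh v ^ 2) * (cosh v ^ 2 - (1 + sinh v ^ 2)))
  by ring.
rewrite (Rminus_diag_eq _ _ (cosh_sq v)), Rmult_0_r, Rplus_0_r.
unfold tanh_sech_elasticity. unfold cosh, sinh in *.
auto_derive; [nra | field; nra].
Qed.

Lemma sinh_cosh_one_sub_sinh_sq_le v : 0 <= v ->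
  sinh v * cosh v * (1 - sinh v ^ 2) <= v * (1 + 3 * sinh v ^ 2).
Proof.
intros Hv.
assert (Hs : 0 <= sinh v).
{ destruct Hv as [Hv | <-]; [left; now apply sinh_pos | rewrite sinh_0; lra]. }
pose proof (cosh_pos v) as Hc. pose proof (sinh_le_mul_cosh v Hv) as Hsv.
apply (Rmult_le_reg_l (cosh v) _ _ Hc).
replace (cosh v * (sinh v * cosh v * (1 - sinh v ^ 2)))
  with (sinh v * (1 + 3 * sinh v ^ 2) - sinh v ^ 3 * (3 + sinh v ^ 2))
  by (transitivity (sinh v * cosh v ^ 2 * (1 - sinh v ^ 2)); [rewrite cosh_sq; ring | ring]).
assert (0 <= sinh v ^ 3 * (3 + sinh v ^ 2)) by (apply Rmult_le_pos; [apply pow_le |]; nra).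
assert (sinh v * (1 + 3 * sinh v ^ 2) <= v * cosh v * (1 + 3 * sinh v ^ 2))
  by (apply Rmult_le_compat_r; nra).
lra.
Qed.

Lemma tanh_sech_elasticity_nonincreasing u w : 0 < u -> u <= w ->
  tanh_sech_elasticity w <= tanh_sech_elasticity u.
Proof.
intros Hu Huw.
apply (nonincreasing_of_is_derive _ u); [| lra | exact Huw].
intros t Ht. eexists; [apply is_derive_tanh_sech_elasticity; lra |].
apply Rmult_le_0_r.
- pose proof (sinh_cosh_one_sub_sinh_sq_le t ltac:(lra)). lra.
- left. apply Rinv_0_lt_compat, pow_lt.
  apply Rmult_lt_0_compat; [apply sinh_pos; lra | apply cosh_pos].
Qed.

Lemma is_derive_sech_deriv_ratio n u : 0 < u ->
  is_derive (sech_deriv_ratio n) u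
    ((n * (n * tanh_sech_deriv (n * u)) * tanh_sech u
      - n * tanh_sech (n * u) * tanh_sech_deriv u) / tanh_sech u ^ 2).
Proof.
intros Hu. unfold sech_deriv_ratio.
apply (is_derive_div (fun t => n * tanh_sech (n * t)) tanh_sech);
  [| apply is_derive_tanh_sech | apply Rgt_not_eq, tanh_sech_pos, Hu].
apply is_derive_scal, is_derive_comp_scal, is_derive_tanh_sech.
Qed.

Lemma sech_deriv_ratio_nonincreasing n u w : 1 <= n -> 0 < u -> u <= w ->
  sech_deriv_ratio n w <= sech_deriv_ratio n u.
Proof.
intros Hn Hu Huw.
apply (nonincreasing_of_is_derive _ u); [| lra | exact Huw].
intros t Ht. eexists; [apply is_derive_sech_deriv_ratio; lra |].
assert (Ft := tanh_sech_pos t ltac:(lra)).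
assert (Fnt := tanh_sech_pos (n * t) ltac:(nra)).
assert (HE := tanh_sech_elasticity_nonincreasing t (n * t) ltac:(lra) ltac:(nra)).
assert (Hnum : t * (n * (n * tanh_sech_deriv (n * t)) * tanh_sech t
                    - n * tanh_sech (n * t) * tanh_sech_deriv t)
             = n * tanh_sech (n * t) * tanh_sech t
               * (tanh_sech_elasticity (n * t) - tanh_sech_elasticity t)).
{ transitivity (n * (tanh_sech t * ((n * t) * tanh_sech_deriv (n * t))
                     - tanh_sech (n * t) * (t * tanh_sech_deriv t))); [ring |].
  rewrite <- !tanh_sech_elasticity_spec by nra. ring. }
apply Rmult_le_0_r; [| left; apply Rinv_0_lt_compat, pow_lt, Ft].
apply (Rmult_le_reg_l t); [lra |]. rewrite Hnum, Rmult_0_r.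
apply Rmult_le_0_l; [| lra].
apply Rmult_le_pos; [apply Rmult_le_pos |]; lra.
Qed.

Lemma sech_mul_chord n a b : 0 < b < a -> exists xi, b < xi < a /\
  sech (n * a) - sech (n * b) = (sech a - sech b) * sech_deriv_ratio n xi.
Proof.
intros Hab.
destruct (cauchy_mean_value sech (fun u => sech (n * u)) (fun u => - tanh_sech u)
            (fun u => n * - tanh_sech (n * u)) b a ltac:(lra)) as [xi [Hxi Hcmv]].
- intros c _. apply is_derive_sech.
- intros c _. apply is_derive_comp_scal, is_derive_sech.
- exists xi. split; [exact Hxi |].
  assert (Fxi := tanh_sech_pos xi ltac:(lra)).
  apply (Rmult_eq_reg_r (- tanh_sech xi)); [| lra].
  rewrite Hcmv. unfold sech_deriv_ratio. field. lra.
Qed.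

Definition sech_mul_arcsech (n x : R) : R := sech (n * arcsech x).

Lemma sech_mul_arcsech_increasing n x y : 0 < n -> 0 < x -> x < y < 1 ->
  sech_mul_arcsech n x < sech_mul_arcsech n y.
Proof.
intros Hn Hx Hy.
assert (Hay := arcsech_pos y ltac:(lra)).
assert (Hyx := arcsech_decreasing x y Hx ltac:(lra)).
apply Rinv_lt_contravar.
- apply Rmult_lt_0_compat; apply cosh_pos.
- apply cosh_increasing; nra.
Qed.

Lemma sech_mul_arcsech_chord n x z : 0 < x < z -> z < 1 ->
  exists xi, arcsech z < xi < arcsech x /\
    sech_mul_arcsech n x = sech_mul_arcsech n z + (x - z) * sech_deriv_ratio n xi.
Proof.
intros Hxz Hz.
assert (Haz := arcsech_pos z ltac:(lra)).
assert (Hzx := arcsech_decreasing x z ltac:(lra) ltac:(lra)).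
destruct (sech_mul_chord n (arcsech x) (arcsech z) ltac:(lra)) as [xi [Hxi Hchord]].
exists xi. split; [exact Hxi |].
unfold sech_mul_arcsech.
rewrite !sech_arcsech in Hchord by lra.
lra.
Qed.

Lemma sech_mul_arcsech_convex n : 1 <= n -> convex_on 0 1 (sech_mul_arcsech n).
Proof.
intros Hn. apply convex_on_of_lt. intros x y t Hx Hxy Hy Ht.
set (z := t * x + (1 - t) * y).
assert (Hz : x < z < y) by (unfold z; nra).
destruct (sech_mul_arcsech_chord n x z) as [xi1 [Hxi1 Hxz]]; [lra | lra |].
destruct (sech_mul_arcsech_chord n z y) as [xi2 [Hxi2 Hzy]]; [lra | lra |].
assert (Hay := arcsech_pos y ltac:(lra)).
apply (le_convex_combination_of_slopes _ x y t (sech_deriv_ratio n xi1) (sech_deriv_ratio n xi2)).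
- lra.
- lra.
- apply sech_deriv_ratio_nonincreasing; lra.
- exact Hxz.
- fold z. lra.
Qed.

Theorem proposition3 (L : nat) (HL : (1 <= L)%nat) :
  (forall x y : R, 0 < x < 1 -> 0 < y < 1 -> x < y -> h L x < h L y) /\
  (forall x y t : R, 0 < x < 1 -> 0 < y < 1 -> 0 <= t <= 1 ->
     h L (t * x + (1 - t) * y) <= t * h L x + (1 - t) * h L y).
Proof.
assert (Hn : 1 <= 2 * INR L + 1) by (pose proof (pos_INR L); lra).
split.
- intros x y Hx Hy Hxy. apply sech_mul_arcsech_increasing; lra.
- exact (sech_mul_arcsech_convex _ Hn).
Qed.
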